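(* Let $K$ be a field and $\nu$ a valuation on $K[x]$. Let $\mathbf{Q}\subseteq K[x]$ be a complete set for $\nu$. Then for every polynomial $p\in K[x]$ there exist $a_1,\ldots,a_r\in K$ and $\lambda_1,\ldots,\lambda_r\in\mathbb{N}^{\mathbf{Q}}$ such that \[ p=\sum_{i=1}^r a_i\mathbf{Q}^{\lambda_i}\quad\text{and}\quad \nu\left(a_i\mathbf{Q}^{\lambda_i}\right)\geq \nu(p)\ \text{ for every } i,\ 1\leq i\leq r, \] and every $Q\in\mathbf{Q}$ appearing in this decomposition (i.e. with $\lambda_i(Q)\neq 0$ for some $i$) satisfies $\deg(Q)\leq\deg(p)$. In particular, for every $\beta\in\nu(K[x])$, the additive group $P_\beta=\{y\in K[x]\mid \nu(y)\geq\beta\}$ is generated by the elements $a\mathbf{Q}^\lambda$ lying in $P_\beta$, where $a\in K$ and $\lambda\in\mathbb{N}^{\mathbf{Q}}$.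
   Context: A valuation on a commutative ring $R$ is a map $\nu:R\to\Gamma\cup\{\infty\}$, $\Gamma$ an ordered abelian group, with $\nu(ab)=\nu(a)+\nu(b)$, $\nu(a+b)\geq\min\{\nu(a),\nu(b)\}$, $\nu(1)=0$, $\nu(0)=\infty$ (nonzero elements may have value $\infty$). For a nonconstant monic $q\in K[x]$ and $f\in K[x]$, the $q$-expansion of $f$ is the unique expression $f=f_0+f_1q+\cdots+f_nq^n$ with each $f_i=0$ or $\deg(f_i)<\deg(q)$; the $q$-truncation of $\nu$ is $\nu_q(f):=\min_{0\leq i\leq n}\nu(f_iq^i)$. A set $\mathbf{Q}$ of nonconstant monic polynomials in $K[x]$ is a complete set for $\nu$ if for every nonconstant $p\in K[x]$ there exists $q\in\mathbf{Q}$ with $\deg(q)\leq\deg(p)$ and $\nu(p)=\nu_q(p)$. $\mathbb{N}^{\mathbf{Q}}$ denotes the set of maps $\lambda:\mathbf{Q}\to\mathbb{N}$ with $\lambda(q)=0$ for all but finitely many $q$, and $\mathbf{Q}^\lambda:=\prod_{q\in\mathbf{Q}}q^{\lambda(q)}$. *)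

From HB Require Import structures.
From mathcomp Require Import all_boot all_order all_algebra.
Set Implicit Arguments. Unset Strict Implicit. Unset Printing Implicit Defensive.
Import GRing.Theory.
Local Open Scope ring_scope.

Definition is_oag (G : zmodType) (le : rel G) : Prop :=
  [/\ reflexive le, antisymmetric le, transitive le, total le
    & forall x y z, le x y -> le (x + z) (y + z)].

(* Values in G ∪ {∞}: [None] is ∞. *)
Section Values.
Variables (G : zmodType) (le : rel G).

Definition vle (x y : option G) : bool :=
  match x, y with
  | _, None => true
  | None, Some _ => false
  | Some a, Some b => le a b
  end.

Definition vadd (x y : option G) : option G :=
  match x, y with
  | Some a, Some b => Some (a + b)
  | _, _ => None
  end.

Definition vmin (x y : option G) : option G := if vle x y then x else y.
End Values.

Definition is_valuation (R : comNzRingType) (G : zmodType) (le : rel G)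
    (nu : R -> option G) : Prop :=
  [/\ forall a b, nu (a * b) = vadd (nu a) (nu b),
      forall a b, vle le (vmin le (nu a) (nu b)) (nu (a + b)),
      nu 1 = Some 0
    & nu 0 = None].

Section Poly.
Variable K : fieldType.

Fixpoint qexp_coefs (q f : {poly K}) (n : nat) : seq {poly K} :=
  match n with
  | 0%N => [::]
  | n'.+1 => (f %% q) :: qexp_coefs q (f %/ q) n'
  end.

(* The q-expansion f = \sum_i f_i q^i; size f many coefficients suffice
   (trailing ones being zero). *)
Definition qexpansion (q f : {poly K}) : seq {poly K} :=
  qexp_coefs q f (size f).

(* q-truncation nu_q(f) = min_i nu(f_i q^i); for f = 0 this is nu(0). *)
Definition qtrunc (G : zmodType) (le : rel G) (nu : {poly K} -> option G)
    (q f : {poly K}) : option G :=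
  foldr (vmin le) (nu 0)
    [seq nu ((qexpansion q f)`_i * q ^+ i) | i <- iota 0 (size (qexpansion q f))].

(* Q is a complete set for nu. Q is a set of nonconstant monic polynomials;
   deg q <= deg p is expressed as size q <= size p. *)
Definition complete_set (G : zmodType) (le : rel G) (nu : {poly K} -> option G)
    (Q : {poly K} -> Prop) : Prop :=
  (forall q, Q q -> q \is monic /\ (1 < size q)%N) /\
  (forall p : {poly K}, (1 < size p)%N ->
     exists q, [/\ Q q, (size q <= size p)%N & nu p = qtrunc le nu q p]).

(* Elements of N^Q: maps lambda : Q -> N with finite support; the support is
   recorded in a finite list and all support points lie in Q. *)
Record NQ (Q : {poly K} -> Prop) := MkNQ {
  nq_fun : {poly K} -> nat;
  nq_supp : seq {poly K};
  nq_suppP : forall q, nq_fun q <> 0%N -> q \in nq_supp /\ Q q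
}.

Definition Qpow (Q : {poly K} -> Prop) (lam : NQ Q) : {poly K} :=
  \prod_(q <- undup (nq_supp lam)) q ^+ nq_fun lam q.
End Poly.

From HB Require Import structures.
From mathcomp Require Import all_boot all_order all_algebra.
From mathcomp Require Import zify.
From Stdlib Require List.
Set Implicit Arguments. Unset Strict Implicit. Unset Printing Implicit Defensive.
Import GRing.Theory.
Local Open Scope ring_scope.

(* The proof is by strong induction on deg p.  Constants are monomials with
   lambda = 0.  Otherwise completeness gives q in Q with deg q <= deg p and
   nu(p) = nu_q(p); in the q-expansion p = sum_i f_i q^i every term satisfies
   nu(f_i q^i) >= nu_q(p) = nu(p) and deg f_i < deg q <= deg p.  By induction
   each f_i decomposes with values >= nu(f_i); multiplying by q^i raises the
   exponent of q in each monomial and shifts each value by nu(q^i), so every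
   monomial of f_i q^i has value >= nu(f_i q^i) >= nu(p). *)

Section Values.
Variables (G : zmodType) (le : rel G).
Hypothesis oag : is_oag le.

Lemma vle_refl x : vle le x x.
Proof. by case: oag => refl _ _ _ _; case: x => //= a; apply: refl. Qed.

Lemma vle_trans x y z : vle le x y -> vle le y z -> vle le x z.
Proof.
case: oag => _ _ trans _ _.
by case: x => [a|]; case: y => [b|]; case: z => [c|] //=; apply: trans.
Qed.

Lemma vle_total x y : vle le x y || vle le y x.
Proof. by case: oag => _ _ _ tot _; case: x => [a|]; case: y => [b|] //=. Qed.

Lemma vmin_l x y : vle le (vmin le x y) x.
Proof.
rewrite /vmin; case: ifP => [_|not_xy]; first exact: vle_refl.
by have := vle_total x y; rewrite not_xy.
Qed.

Lemma vmin_r x y : vle le (vmin le x y) y.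
Proof. by rewrite /vmin; case: ifP => // _; apply: vle_refl. Qed.

Lemma vmin_ge b x y : vle le b x -> vle le b y -> vle le b (vmin le x y).
Proof. by rewrite /vmin; case: ifP. Qed.

Lemma vadd_mono x y z : vle le x y -> vle le (vadd x z) (vadd y z).
Proof.
case: oag => _ _ _ _ addle; case: z => [c|]; last by case: x; case: y.
by case: x => [a|]; case: y => [b|] //=; apply: addle.
Qed.

Lemma foldr_vmin_le x0 (s : seq (option G)) y :
  y \in s -> vle le (foldr (vmin le) x0 s) y.
Proof.
elim: s => //= a s IH; rewrite in_cons => /orP [/eqP -> | ys].
  exact: vmin_l.
exact: vle_trans (vmin_r _ _) (IH ys).
Qed.

Lemma oag_double_eq0 (g : G) : g + g = 0 -> g = 0.
Proof.
case: oag => _ anti _ tot addle gg; apply: anti.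
case/orP: (tot g 0) => g_le; rewrite g_le ?andbT //=.
- by have := addle g 0 g g_le; rewrite gg add0r.
- by have := addle 0 g g g_le; rewrite gg add0r.
Qed.
End Values.

Section Valuation.
Variables (R : comNzRingType) (G : zmodType) (le : rel G).
Variable nu : R -> option G.
Hypotheses (oag : is_oag le) (val : is_valuation le nu).

(* nu(-1) = 0 since 2 nu(-1) = nu(1) = 0; hence nu is invariant under negation. *)
Lemma nuN1 : nu (-1) = Some 0.
Proof.
case: val => nuM _ nu1 _.
have := nuM (-1) (-1); rewrite mulrNN mulr1 nu1.
by case: (nu (-1)) => [g|] //= [/esym/(oag_double_eq0 oag) ->].
Qed.

Lemma nuN y : nu (- y) = nu y.
Proof.
case: val => nuM _ _ _.
by rewrite -mulrN1 nuM nuN1; case: (nu y) => //= g; rewrite addr0.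
Qed.

Lemma nu_add_ge b x y :
  vle le b (nu x) -> vle le b (nu y) -> vle le b (nu (x + y)).
Proof.
case: val => _ nuD _ _ b_x b_y; apply: (vle_trans oag _ (nuD x y)).
exact: vmin_ge.
Qed.

Lemma nu_zero_ge b : vle le b (nu 0).
Proof. by case: val => _ _ _ ->; case: b. Qed.

Lemma nu_sum_ge b n (F : 'I_n -> R) :
  (forall i, vle le b (nu (F i))) -> vle le b (nu (\sum_(i < n) F i)).
Proof.
move=> bF; apply: (big_ind (fun x => vle le b (nu x))) => //.
- exact: nu_zero_ge.
- exact: nu_add_ge.
Qed.

Lemma nu_mulz_ge b x k : vle le b (nu x) -> vle le b (nu (x *~ k)).
Proof.
have nu_muln_ge n : vle le b (nu x) -> vle le b (nu (x *+ n)).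
  move=> b_x; elim: n => [|n IH]; first by rewrite mulr0n nu_zero_ge.
  by rewrite mulrS nu_add_ge.
by case: k => n b_x /=; rewrite ?NegzE ?mulrNz ?nuN nu_muln_ge.
Qed.
End Valuation.

Section QExpansion.
Variable K : fieldType.

Lemma size_qexp_coefs (q f : {poly K}) n : size (qexp_coefs q f n) = n.
Proof. by elim: n f => //= n IH f; rewrite IH. Qed.

Lemma size_qexp_coef (q f : {poly K}) n (i : nat) :
  q != 0 -> (size ((qexp_coefs q f n)`_i)%R < size q)%N.
Proof.
move=> q0; elim: n f i => [|n IH] f [|i] /=;
  by rewrite ?nth_nil ?size_poly0 ?size_poly_gt0 ?ltn_modp.
Qed.

Lemma qexp_coefs_sum (q f : {poly K}) n :
  (1 < size q)%N -> (size f <= n)%N ->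
  f = \sum_(i < n) (qexp_coefs q f n)`_i * q ^+ i.
Proof.
move=> q_gt1; elim: n f => [|n IH] f f_le.
  by rewrite big_ord0; apply/eqP; rewrite -size_poly_eq0 -leqn0.
have q0 : q != 0 by rewrite -size_poly_gt0; lia.
have div_le : (size (f %/ q)%R <= n)%N.
  by rewrite size_divp //; move: (size f) (size q) f_le q_gt1 => a b; lia.
rewrite big_ord_recl /= expr0 mulr1.
under eq_bigr => i _ do rewrite /bump leq0n add0n add1n exprSr mulrA.
by rewrite -mulr_suml -(IH _ div_le) addrC -divp_eq.
Qed.

Lemma qtrunc_le_term (G : zmodType) (le : rel G) (nu : {poly K} -> option G)
    (q p : {poly K}) (i : 'I_(size p)) :
  is_oag le -> vle le (qtrunc le nu q p) (nu ((qexpansion q p)`_i * q ^+ i)).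
Proof.
move=> oag; apply: foldr_vmin_le oag _ _ _ _.
apply/mapP; exists (nat_of_ord i) => //.
by rewrite mem_iota add0n /qexpansion size_qexp_coefs ltn_ord.
Qed.
End QExpansion.

Section Monomials.
Variables (K : fieldType) (Q : {poly K} -> Prop).

Definition nq0 : NQ Q :=
  @MkNQ K Q (fun _ => 0%N) [::] (fun q q_supp => ltac:(by case: q_supp)).

Lemma nq_addq_supp (lam : NQ Q) (q : {poly K}) (Qq : Q q) (i : nat) x :
  (nq_fun lam x + (if x == q then i else 0))%N <> 0%N ->
  x \in q :: nq_supp lam /\ Q x.
Proof.
case: (eqVneq x q) => [-> _ | x_neq_q]; first by rewrite mem_head.
by rewrite addn0 => /nq_suppP [x_supp Qx]; rewrite in_cons x_supp orbT.
Qed.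

Definition nq_addq (lam : NQ Q) (q : {poly K}) (Qq : Q q) (i : nat) : NQ Q :=
  @MkNQ K Q (fun x => nq_fun lam x + (if x == q then i else 0))%N
    (q :: nq_supp lam) (@nq_addq_supp lam q Qq i).

Lemma Qpow_over (lam : NQ Q) (s : seq {poly K}) :
  uniq s -> (forall x, nq_fun lam x != 0%N -> x \in s) ->
  Qpow lam = \prod_(x <- s) x ^+ nq_fun lam x.
Proof.
have drop_trivial r : \prod_(x <- r) x ^+ nq_fun lam x =
    \prod_(x <- [seq y <- r | nq_fun lam y != 0%N]) x ^+ nq_fun lam x.
  rewrite big_filter [RHS]big_mkcond /=; apply: eq_bigr => x _.
  by case: ifP => // /negbFE /eqP ->.
move=> s_uniq s_supp; rewrite /Qpow drop_trivial [RHS]drop_trivial.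
apply/perm_big/uniq_perm; rewrite ?filter_uniq ?undup_uniq // => x.
rewrite !mem_filter; case: (boolP (nq_fun lam x != 0%N)) => //= lam_x.
by rewrite s_supp // mem_undup; have [] := nq_suppP (elimN eqP lam_x).
Qed.

Lemma Qpow_nq0 : Qpow nq0 = 1.
Proof. by rewrite /Qpow big_nil. Qed.

Lemma Qpow_addq lam q (Qq : Q q) i :
  Qpow (nq_addq lam Qq i) = Qpow lam * q ^+ i.
Proof.
set s := undup (q :: nq_supp lam).
have s_uniq : uniq s by apply: undup_uniq.
rewrite (@Qpow_over _ s) //; last first.
  by move=> x /eqP /nq_suppP [x_supp _]; rewrite mem_undup.
rewrite (@Qpow_over lam s) //; last first.
  by move=> x /eqP /nq_suppP [x_supp _]; rewrite mem_undup in_cons x_supp orbT.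
under eq_bigr => x _ do rewrite /= exprD.
rewrite big_split /=; congr (_ * _).
have q_s : q \in s by rewrite mem_undup mem_head.
by rewrite (bigD1_seq q) //= eqxx big1 ?mulr1 // => x /negbTE ->.
Qed.
End Monomials.

Lemma Forall_nth (A : Type) (P : A -> Prop) (d : A) (s : seq A) (i : nat) :
  List.Forall P s -> (i < size s)%N -> P (nth d s i).
Proof.
elim: s i => [|x s IH] [|i] // /List.Forall_cons_iff [Px Ps] /= i_lt.
  exact: Px.
exact: IH.
Qed.

Section Decomposition.
Variables (K : fieldType) (G : zmodType) (le : rel G).
Variables (nu : {poly K} -> option G) (Q : {poly K} -> Prop).
Hypotheses (oag : is_oag le) (val : is_valuation le nu).

Definition monomial (t : K * NQ Q) : {poly K} := t.1 *: Qpow t.2.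

Definition admissible (v : option G) (m : nat) (t : K * NQ Q) : Prop :=
  vle le v (nu (monomial t)) /\
  forall q, nq_fun t.2 q <> 0%N -> (size q <= m)%N.

Definition decomposes (v : option G) (m : nat) (p : {poly K}) : Prop :=
  exists s : seq (K * NQ Q),
    p = \sum_(t <- s) monomial t /\ List.Forall (admissible v m) s.

Lemma decomposes_add v m p p' :
  decomposes v m p -> decomposes v m p' -> decomposes v m (p + p').
Proof.
move=> [s [-> adm_s]] [t [-> adm_t]]; exists (s ++ t).
by rewrite big_cat; split=> //; apply/List.Forall_app.
Qed.

Lemma decomposes_sum v m n (F : 'I_n -> {poly K}) :
  (forall i, decomposes v m (F i)) -> decomposes v m (\sum_(i < n) F i).
Proof.
move=> decF; apply: (big_ind (decomposes v m)) => //.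
- by exists [::]; rewrite big_nil.
- exact: decomposes_add.
Qed.

Lemma decomposes_weaken v v' m m' p :
  vle le v' v -> (m <= m')%N -> decomposes v m p -> decomposes v' m' p.
Proof.
move=> v'_le m_le [s [p_eq adm_s]]; exists s; split=> //.
move: adm_s; apply: List.Forall_impl => t [t_val t_keys]; split.
  exact (vle_trans oag v'_le t_val).
by move=> q /t_keys q_le; apply: leq_trans m_le.
Qed.

Lemma decomposes_const m (c : K) : decomposes (nu c%:P) m c%:P.
Proof.
exists [:: (c, nq0 Q)]; rewrite big_seq1 /monomial /= Qpow_nq0 -alg_polyC.
split=> //; constructor=> //; split=> //.
by rewrite /monomial /= Qpow_nq0 vle_refl.
Qed.

Lemma decomposes_mulq v m q (Qq : Q q) (i : nat) f :
  (size q <= m)%N -> decomposes v m f ->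
  decomposes (vadd v (nu (q ^+ i))) m (f * q ^+ i).
Proof.
case: val => nuM _ _ _ q_le [s [-> adm_s]].
exists [seq (t.1, nq_addq t.2 Qq i) | t <- s]; split.
  rewrite big_map mulr_suml; apply: eq_bigr => t _.
  by rewrite /monomial /= Qpow_addq scalerAl.
apply/List.Forall_map; move: adm_s; apply: List.Forall_impl => t [t_val t_keys]; split.
  by rewrite /monomial /= Qpow_addq scalerAl nuM vadd_mono.
by move=> x /=; case: (eqVneq x q) => [-> //|_]; rewrite addn0 => /t_keys.
Qed.

Lemma decomposition_exists :
  complete_set le nu Q -> forall p, decomposes (nu p) (size p) p.
Proof.
move=> [keys complete] p; have [n] := ubnP (size p); elim: n p => // n IH p p_lt.
have [p_le1 | p_gt1] := leqP (size p) 1.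
  by rewrite [p]size1_polyC //; apply: decomposes_const.
have [q [Qq q_le nu_p]] := complete p p_gt1.
have [q_monic q_gt1] := keys q Qq.
have p_eq := qexp_coefs_sum q_gt1 (leqnn (size p)).
suff dec_sum : decomposes (nu p) (size p)
    (\sum_(i < size p) (qexp_coefs q p (size p))`_i * q ^+ i).
  by rewrite -p_eq in dec_sum.
apply: decomposes_sum => i; set f := (qexp_coefs q p (size p))`_i.
have f_lt : (size f < size q)%N by apply/size_qexp_coef/monic_neq0.
have f_dec : decomposes (nu f) (size p) f.
  apply: decomposes_weaken (IH f _) => //; first exact: vle_refl.
    exact: ltnW (leq_trans f_lt q_le).
  by apply: leq_trans f_lt _; apply: leq_trans q_le _; rewrite -ltnS.
apply: decomposes_weaken (decomposes_mulq Qq i q_le f_dec) => //.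
by case: val => nuM _ _ _; rewrite -nuM nu_p; apply: (qtrunc_le_term nu q i).
Qed.

Lemma decomposition_family v m p :
  decomposes v m p ->
  exists (r : nat) (a : 'I_r -> K) (lam : 'I_r -> NQ Q),
    [/\ p = \sum_(i < r) a i *: Qpow (lam i),
        forall i, vle le v (nu (a i *: Qpow (lam i)))
      & forall i q, nq_fun (lam i) q <> 0%N -> (size q <= m)%N].
Proof.
move=> [s [p_eq adm_s]]; set d := (0 : K, nq0 Q).
have adm_nth (i : 'I_(size s)) := Forall_nth d adm_s (ltn_ord i).
exists (size s), (fun i => (nth d s i).1), (fun i => (nth d s i).2); split.
- by rewrite p_eq (big_nth d) big_mkord.
- by move=> i; have [] := adm_nth i.
- by move=> i; have [] := adm_nth i.
Qed.
End Decomposition.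

(* Part 1 is the decomposition with v = nu(p), m = size p; part 2 says that
   P_beta is generated by its monomials, one inclusion being part 1 and the
   other the closure of P_beta under integer combinations. *)
Theorem mainTheorem1 (K : fieldType) (G : zmodType) (le : rel G)
    (nu : {poly K} -> option G) (Q : {poly K} -> Prop) :
  is_oag le -> is_valuation le nu -> complete_set le nu Q ->
  (forall p : {poly K},
     exists (r : nat) (a : 'I_r -> K) (lam : 'I_r -> NQ Q),
       [/\ p = \sum_(i < r) a i *: Qpow (lam i),
           forall i, vle le (nu p) (nu (a i *: Qpow (lam i)))
         & forall i q, nq_fun (lam i) q <> 0%N -> (size q <= size p)%N])
  /\
  (forall beta : option G, (exists f, nu f = beta) ->
     forall y : {poly K},
       vle le beta (nu y) <->
       exists (r : nat) (k : 'I_r -> int) (a : 'I_r -> K) (lam : 'I_r -> NQ Q),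
         (forall i, vle le beta (nu (a i *: Qpow (lam i)))) /\
         y = \sum_(i < r) (a i *: Qpow (lam i)) *~ k i).
Proof.
move=> oag val complete.
have decompose p := decomposition_family (decomposition_exists oag val complete p).
split=> [p | beta _ y]; first exact: decompose.
split=> [beta_y | [r [k [a [lam [beta_mon ->]]]]]].
  have [r [a [lam [y_eq y_mon _]]]] := decompose y.
  exists r, (fun=> 1), a, lam; split=> [i|].
    exact (vle_trans oag beta_y (y_mon i)).
  by rewrite {1}y_eq; apply: eq_bigr => i _; rewrite mulr1z.
by apply: nu_sum_ge => // i; apply: nu_mulz_ge.
Qed.
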